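(* Let $\mathcal{T}$ be a finite set and let $\mathbf{p},\mathbf{q}$ be probability measures on $\mathcal{T}$. Write $\mathbf{h}_{\mathbf{p},\mathbf{q}}(x) = \mathbf{q}(x) - \mathbf{p}(x)$. Let $\prec$ be any strict total order on $\mathcal{T}$ such that $\mathbf{h}_{\mathbf{p},\mathbf{q}}(x) > \mathbf{h}_{\mathbf{p},\mathbf{q}}(x')$ implies $x \prec x'$ and $\mathbf{h}_{\mathbf{p},\mathbf{q}}(x) < \mathbf{h}_{\mathbf{p},\mathbf{q}}(x')$ implies $x' \prec x$. Let $X_\mathbf{p} \sim \mathbf{p}$ and $Y_\mathbf{q} \sim \mathbf{q}$ be independent and define $R_{\mathbf{p},\mathbf{q}}$ to be $0$ if $Y_\mathbf{q} \prec X_\mathbf{p}$, $1$ if $X_\mathbf{p} \prec Y_\mathbf{q}$, and an independent $\mathrm{Bernoulli}(1/2)$ random variable if $X_\mathbf{p} = Y_\mathbf{q}$. Then $$\Pr[R_{\mathbf{p},\mathbf{q}} = 0] \ge \frac12 + \frac12\Big(\max_{x\in\mathcal{T}} \mathbf{h}_{\mathbf{p},\mathbf{q}}(x)\Big)^2.$$ *)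

From mathcomp Require Import all_boot all_order all_algebra.
Set Implicit Arguments. Unset Strict Implicit. Unset Printing Implicit Defensive.
Import Order.TTheory GRing.Theory Num.Theory.
Local Open Scope ring_scope.

Definition is_pmf (R : realFieldType) (T : finType) (p : T -> R) : Prop :=
  (forall x, 0 <= p x) /\ \sum_(x : T) p x = 1.

Definition strict_total_order (T : finType) (lt : rel T) : Prop :=
  [/\ irreflexive lt, transitive lt & forall x y, x != y -> lt x y || lt y x].

Definition hpq (R : realFieldType) (T : finType) (p q : T -> R) (x : T) : R :=
  q x - p x.

(* R_{p,q} as a function of the outcome (X, Y, B), where B is the
   independent fair coin used when X = Y. *)
Definition Rpq (T : finType) (lt : rel T) (x y : T) (b : bool) : nat :=
  if lt y x then 0%N else if lt x y then 1%N else nat_of_bool b.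

(* Pr[R_{p,q} = 0] on the product probability space T * T * bool with
   law p (x) q (x) Bernoulli(1/2) (X, Y, B independent). *)
Definition prob_R0 (R : realFieldType) (T : finType) (lt : rel T)
    (p q : T -> R) : R :=
  \sum_(x : T) \sum_(y : T) \sum_(b : bool)
     (if Rpq lt x y b == 0%N then p x * q y * 2^-1 else 0).

From mathcomp Require Import all_boot all_order all_algebra.
From mathcomp Require Import ring lra.
Import Order.TTheory GRing.Theory Num.Theory.
Local Open Scope ring_scope.

(* With sg(x, y) in {1, -1, 0} recording whether y precedes x, x precedes y, or
   x = y, Pr[R = 0] = 1/2 + D/2 where D = sum_(x,y) p(x) q(y) sg(x, y).  By
   antisymmetry of sg the q(x) q(y) part of D vanishes, so D = sum_y q(y) G(y)
   with G(y) the h-mass before y minus the h-mass after y.  As h sums to 0 and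
   is antitone along the order, every G(y) is nonnegative and
   G(x_max) >= h(x_max) >= 0; with q(x_max) >= h(x_max) this gives
   D >= q(x_max) G(x_max) >= h(x_max)^2. *)

Section OrderSign.
Local Set Implicit Arguments.
Local Unset Strict Implicit.
Variables (T : finType) (lt : rel T).

Definition order_sg (R : pzRingType) (x y : T) : R :=
  if lt y x then 1 else if lt x y then -1 else 0.

Definition signed_mass (R : pzRingType) (h : T -> R) (y : T) : R :=
  \sum_x h x * order_sg R y x.

Hypothesis lt_order : strict_total_order lt.

Lemma lt_asym x y : lt x y -> ~~ lt y x.
Proof.
case: lt_order => lt_irr lt_trans _ lt_xy; apply/negP => lt_yx.
by have := lt_trans _ _ _ lt_xy lt_yx; rewrite lt_irr.
Qed.

Lemma lt_total x y : x != y -> lt x y || lt y x.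
Proof. by case: lt_order => _ _; apply. Qed.

Lemma order_sgC {R : pzRingType} x y : order_sg R y x = - order_sg R x y.
Proof.
rewrite /order_sg; case lt_yx: (lt y x); case lt_xy: (lt x y) => //=;
  rewrite ?opprK ?oppr0 //.
by move: (lt_asym lt_xy); rewrite lt_yx.
Qed.

Lemma order_sgxx {R : pzRingType} x : order_sg R x x = 0.
Proof. by case: lt_order => lt_irr _ _; rewrite /order_sg lt_irr. Qed.

Lemma sum_sym_order_sg (R : numDomainType) (w : T -> T -> R) :
  (forall x y, w x y = w y x) ->
  \sum_x \sum_y w x y * order_sg R x y = 0.
Proof.
move=> w_sym; set S := (\sum_x _).
have S_opp : S = - S.
  rewrite {2}/S exchange_big /= -sumrN; apply: eq_bigr => x _.
  rewrite -sumrN; apply: eq_bigr => y _.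
  by rewrite (order_sgC x y) w_sym mulrN opprK.
apply/eqP; have: S *+ 2 == 0 by rewrite mulr2n {1}S_opp addNr.
by rewrite mulrn_eq0.
Qed.

Section SignedMass.
Variables (R : realDomainType) (h : T -> R).
Hypothesis h_sum0 : \sum_x h x = 0.
Hypothesis h_antitone : forall x y, lt x y -> h y <= h x.

Lemma signed_massE c y : signed_mass h y = \sum_x h x * (order_sg R y x + c).
Proof.
under [RHS]eq_bigr do rewrite mulrDr.
by rewrite big_split /= -mulr_suml h_sum0 mul0r addr0.
Qed.

Lemma signed_mass_ge_self y : 0 <= h y -> h y <= signed_mass h y.
Proof.
move=> h_y_ge0; rewrite (signed_massE 1) (bigD1 y) //= order_sgxx.
rewrite add0r mulr1 lerDl /order_sg.
apply: sumr_ge0 => x x_neq_y; case lt_xy: (lt x y) => /=.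
  by have := h_antitone lt_xy; lra.
case lt_yx: (lt y x) => /=; first lra.
by move: (lt_total x_neq_y); rewrite lt_xy lt_yx.
Qed.

Lemma signed_mass_ge0 y : 0 <= signed_mass h y.
Proof.
have [h_y_ge0 | h_y_lt0] := lerP 0 (h y).
  exact: le_trans h_y_ge0 (signed_mass_ge_self h_y_ge0).
rewrite (signed_massE (-1)); apply: sumr_ge0 => x _; rewrite /order_sg.
case lt_xy: (lt x y) => /=; first lra.
case lt_yx: (lt y x) => /=.
  by have := h_antitone lt_yx; nra.
case: (eqVneq x y) => [-> | x_neq_y]; first lra.
by move: (lt_total x_neq_y); rewrite lt_xy lt_yx.
Qed.

End SignedMass.

Lemma prob_R0E (R : realFieldType) (p q : T -> R) :
  prob_R0 lt p q = 2^-1 * \sum_x \sum_y p x * q y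
                   + 2^-1 * \sum_x \sum_y p x * q y * order_sg R x y.
Proof.
rewrite /prob_R0 !mulr_sumr -big_split; apply: eq_bigr => x _ /=.
rewrite !mulr_sumr -big_split; apply: eq_bigr => y _ /=.
rewrite big_bool /Rpq /order_sg.
by case: (lt y x); case: (lt x y) => /=; field.
Qed.

Lemma sum_mul_order_sgE (R : numDomainType) (p q : T -> R) :
  \sum_x \sum_y p x * q y * order_sg R x y
  = \sum_y q y * signed_mass (fun x => q x - p x) y.
Proof.
have qq0 : \sum_x \sum_y q x * q y * order_sg R x y = 0.
  by apply: sum_sym_order_sg => x y; rewrite mulrC.
rewrite -[LHS]subr0 -[X in _ - X]qq0 -sumrB.
under eq_bigr do rewrite -sumrB.
rewrite exchange_big /=; apply: eq_bigr => y _.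
rewrite mulr_sumr; apply: eq_bigr => x _.
by rewrite (order_sgC x y); ring.
Qed.

End OrderSign.

Lemma max_ge0_of_sum0 {R : numDomainType} {T : finType} {h : T -> R} {x0 : T} :
  \sum_x h x = 0 -> (forall x, h x <= h x0) -> 0 <= h x0.
Proof.
move=> h_sum0 h_le.
have : \sum_x h x <= \sum_(x : T) h x0 by apply: ler_sum => x _.
rewrite h_sum0 sumr_const -mulr_natl pmulr_rge0 // ltr0n.
by apply/card_gt0P; exists x0.
Qed.

Theorem propositionA18 (R : realFieldType) (T : finType) (p q : T -> R)
  (lt : rel T) :
  is_pmf p -> is_pmf q ->
  strict_total_order lt ->
  (forall x x', hpq p q x > hpq p q x' -> lt x x') ->
  (forall x x', hpq p q x < hpq p q x' -> lt x' x) ->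
  forall xmax : T, (forall x, hpq p q x <= hpq p q xmax) ->
  prob_R0 lt p q >= 2^-1 + 2^-1 * (hpq p q xmax) ^+ 2.
Proof.
(* The two monotonicity hypotheses are the same statement up to renaming. *)
move=> [p_ge0 p_sum1] [q_ge0 q_sum1] lt_order _ h_lt xmax h_max.
set h := hpq p q; set m := h xmax.
have h_sum0 : \sum_x h x = 0 by rewrite sumrB p_sum1 q_sum1 subrr.
have h_antitone x y : lt x y -> h y <= h x.
  move=> lt_xy; rewrite leNgt; apply/negP => /h_lt lt_yx.
  by move: (lt_asym lt_order lt_xy); rewrite lt_yx.
have mass_ge0 := signed_mass_ge0 lt_order h_sum0 h_antitone.
have m_ge0 : 0 <= m by exact: max_ge0_of_sum0 h_sum0 h_max.
have m_le_q : m <= q xmax by rewrite /m /h /hpq; have := p_ge0 xmax; lra.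
have m_le_mass : m <= signed_mass lt h xmax.
  by apply: (signed_mass_ge_self lt_order h_sum0 h_antitone).
have pq_sum1 : \sum_x \sum_y p x * q y = 1.
  by rewrite -(mulr1 1) -{1}p_sum1 -q_sum1 big_distrlr.
rewrite prob_R0E pq_sum1 mulr1 lerD2l ler_pM2l ?invr_gt0 ?ltr0n //.
rewrite sum_mul_order_sgE // (bigD1 xmax) //= -[_ ^+ 2]addr0 expr2.
apply: lerD; first exact: ler_pM.
by apply: sumr_ge0 => y _; apply: mulr_ge0.
Qed.
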